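(* Let $\alpha\colon G\to\mathrm{Aut}(A)$ be a tracially amenable action of a discrete group $G$ on a unital C$^*$-algebra $A$ with $T(A)\neq\emptyset$. Then $G$ is amenable if and only if $A$ has a $G$-invariant tracial state.
   Context: $T(A)$ is the set of tracial states. For $\xi,\eta\in C_c(G,A)$ set $\langle\xi,\eta\rangle=\sum_g\xi(g)^*\eta(g)$, with $\ell^2(G,A)$ the completion and $\widetilde{\alpha}_g(\xi)(h)=\alpha_g(\xi(g^{-1}h))$; $\|x\|_{2,u}=\sup_{\tau\in T(A)}\tau(x^*x)^{1/2}$ for $x\in A$ and $\|\xi\|_{2,u}=\sup_\tau\tau(\langle\xi,\xi\rangle)^{1/2}$. The action is tracially amenable if for all finite $F\subseteq A$, $K\subseteq G$, $\varepsilon>0$ there is $\xi\in C_c(G,A)$ with $\|\xi\|\le1$, $\|\xi a-a\xi\|_{2,u}<\varepsilon$ ($a\in F$), $\|\langle\xi,\xi\rangle-1\|_{2,u}<\varepsilon$, $\|\widetilde\alpha_g(\xi)-\xi\|_{2,u}<\varepsilon$ ($g\in K$). *)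

From HB Require Import structures.
From mathcomp Require Import all_boot all_order all_algebra.
From mathcomp Require Import complex.
From mathcomp Require Import boolp classical_sets cardinality fsbigop reals.
Set Implicit Arguments. Unset Strict Implicit. Unset Printing Implicit Defensive.
Import Order.TTheory GRing.Theory Num.Theory.
Local Open Scope classical_set_scope.
Local Open Scope ring_scope.

Definition group_axioms (G : Type) (mul : G -> G -> G) (one : G) (inv : G -> G)
  : Prop :=
  [/\ forall x y z, mul x (mul y z) = mul (mul x y) z,
      forall x, mul one x = x, forall x, mul x one = x,
      forall x, mul (inv x) x = one & forall x, mul x (inv x) = one].

Definition bounded_fun (R : realType) (G : Type) (f : G -> R) : Prop :=
  exists M : R, forall x, `|f x| <= M.

Definition amenable_group (R : realType) (G : Type) (mul : G -> G -> G)
  (inv : G -> G) : Prop :=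
  exists m : (G -> R) -> R,
  [/\ forall f g, bounded_fun f -> bounded_fun g -> m (f \+ g) = m f + m g,
      forall (c : R) f, bounded_fun f -> m (fun x => c * f x) = c * m f,
      forall f, bounded_fun f -> (forall x, 0 <= f x) -> 0 <= m f,
      m (fun _ => 1) = 1 &
      forall f g, bounded_fun f -> m (fun h => f (mul (inv g) h)) = m f].

Section CStar.
Variables (R : realType) (A : algType R[i]) (star : A -> A) (nrm : A -> R).

Definition is_unital_Cstar : Prop :=
  [/\ [/\ forall x, star (star x) = x,
          forall x y, star (x + y) = star x + star y,
          forall (c : R[i]) x, star (c *: x) = c^* *: star x &
          forall x y, star (x * y) = star y * star x],
      [/\ forall x, 0 <= nrm x,
          forall x, nrm x = 0 -> x = 0,
          forall x y, nrm (x + y) <= nrm x + nrm y,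
          forall (c : R[i]) x, nrm (c *: x) = complex.Re (`|c|) * nrm x &
          forall x y, nrm (x * y) <= nrm x * nrm y],
      forall x, nrm (star x * x) = nrm x ^+ 2 &
      forall u : nat -> A,
        (forall e : R, 0 < e -> exists N, forall m n, (N <= m)%N -> (N <= n)%N ->
           nrm (u m - u n) < e) ->
        exists l, forall e : R, 0 < e -> exists N, forall n, (N <= n)%N ->
           nrm (u n - l) < e].

Definition tracial_state (tau : A -> R[i]) : Prop :=
  [/\ forall x y, tau (x + y) = tau x + tau y,
      forall (c : R[i]) x, tau (c *: x) = c * tau x,
      forall x, 0 <= tau (star x * x),
      tau 1 = 1 &
      forall x y, tau (x * y) = tau (y * x)].

Definition sup2u (y : A) : R :=
  sup [set Num.sqrt (complex.Re (tau y)) | tau in [set tau | tracial_state tau]].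

Definition norm2u (x : A) : R := sup2u (star x * x).

End CStar.

Section Action.
Variables (R : realType) (G : choiceType) (mul : G -> G -> G) (one : G)
  (inv : G -> G) (A : algType R[i]) (star : A -> A) (nrm : A -> R).

Definition is_action (alpha : G -> A -> A) : Prop :=
  [/\ (forall g x y, alpha g (x + y) = alpha g x + alpha g y) /\
      (forall g (c : R[i]) x, alpha g (c *: x) = c *: alpha g x),
      forall g x y, alpha g (x * y) = alpha g x * alpha g y,
      forall g, alpha g 1 = 1,
      forall g x, alpha g (star x) = star (alpha g x) &
      (forall x, alpha one x = x) /\
      (forall g h x, alpha (mul g h) x = alpha g (alpha h x))].

Definition compact_supp (xi : G -> A) : Prop := finite_set [set g | xi g != 0].

Definition ip (xi eta : G -> A) : A :=
  \sum_(g \in [set: G]) (star (xi g) * eta g).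

Definition ell2_norm (xi : G -> A) : R := Num.sqrt (nrm (ip xi xi)).

Definition norm2u_ell2 (xi : G -> A) : R := sup2u star (ip xi xi).

Definition talpha (alpha : G -> A -> A) (g : G) (xi : G -> A) : G -> A :=
  fun h => alpha g (xi (mul (inv g) h)).

Definition tracially_amenable (alpha : G -> A -> A) : Prop :=
  forall (F : seq A) (K : seq G) (eps : R), 0 < eps ->
  exists xi : G -> A,
  [/\ compact_supp xi,
      ell2_norm xi <= 1,
      forall a, a \in F -> norm2u_ell2 (fun g => xi g * a - a * xi g) < eps,
      norm2u star (ip xi xi - 1) < eps &
      forall g, g \in K -> norm2u_ell2 (fun h => talpha alpha g xi h - xi h) < eps].

Definition invariant_tracial_state (alpha : G -> A -> A) : Prop :=
  exists tau : A -> R[i],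
    tracial_state star tau /\ forall g x, tau (alpha g x) = tau x.

End Action.

(* Amenable => invariant trace: for an invariant mean m on G and a tracial
   state tau, x |-> m (g |-> tau (alpha_{g^-1} x)) is an alpha-invariant tracial
   state.  The functions averaged by m are bounded because a tracial state
   satisfies |Re tau x| <= 2 ||x|| + 1: for self-adjoint h with ||h|| <= 1/2,
   1 - h = (1 - l)^* (1 - l) where l is the limit of the contraction
   w |-> (h + w^2) / 2, so positivity gives tau h <= 1.

   Invariant trace => amenable: a vector xi given by tracial amenability yields
   the finitely supported weights h |-> tau (xi(h)^* xi(h)) on G, of total mass
   close to 1.  By invariance of tau, translating these weights by g amounts to
   replacing xi by tilde-alpha_g xi, and |tau (a^* a) - tau (b^* b)| is bounded
   by s tau ((a - b)^* (a - b)) / 2 + (tau (a^* a) + tau (b^* b)) / s for all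
   s > 0.  The associated means are therefore almost invariant, and their
   ultralimit along the net (K, eps) -> (G, 0) is an invariant mean. *)

From Pilot Require Import Defs.
From HB Require Import structures.
From mathcomp Require Import all_boot all_order all_algebra.
From mathcomp Require Import complex.
From mathcomp Require Import boolp classical_sets cardinality fsbigop reals.
From mathcomp Require Import finmap.
From mathcomp Require Import topology normedtype.
From mathcomp Require Import ring lra.
Set Implicit Arguments. Unset Strict Implicit. Unset Printing Implicit Defensive.
Import Order.TTheory GRing.Theory Num.Theory.
Import numFieldTopology.Exports numFieldNormedType.Exports.
Local Open Scope ring_scope.

Lemma inv_succ_small (R : realType) (e : R) : 0 < e ->
  exists N, forall n, (N <= n)%N -> n.+1%:R^-1 < e.
Proof.
move=> e0; have [N hN] : exists N : nat, e^-1 < N%:R.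
  by exists (Num.bound e^-1); apply: archi_boundP; rewrite invr_ge0 ltW.
exists N => n le_Nn; rewrite -ltf_pV2 ?posrE ?invr_gt0 ?ltr0Sn // invrK.
by apply: (lt_le_trans hN); rewrite ler_nat ltnW.
Qed.

Lemma expr_half_small (R : realType) (e : R) : 0 < e ->
  exists N, forall n, (N <= n)%N -> (2^-1 : R) ^+ n < e.
Proof.
move=> /inv_succ_small[N hN]; exists N => n /hN; apply: le_lt_trans.
rewrite exprVn lef_pV2 ?posrE ?exprn_gt0 ?ltr0Sn // -natrX ler_nat.
exact: ltn_expl.
Qed.

(** * Unital C*-algebras *)

Definition chalf (R : realType) : R[i] := (2^-1)%:C%C.

Lemma chalf_double (R : realType) : chalf R + chalf R = 1.
Proof. by apply/eqP; rewrite eq_complex /= addr0 eqxx andbT; apply/eqP; lra. Qed.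

Section CStarAlgebra.
Variables (R : realType) (A : algType R[i]) (star : A -> A) (nrm : A -> R).
Hypothesis HA : is_unital_Cstar star nrm.
Local Open Scope complex_scope.

Lemma starK x : star (star x) = x.
Proof. by case: HA => [[h _ _ _] _ _ _]; apply: h. Qed.
Lemma starD x y : star (x + y) = star x + star y.
Proof. by case: HA => [[_ h _ _] _ _ _]; apply: h. Qed.
Lemma starZ c x : star (c *: x) = c^* *: star x.
Proof. by case: HA => [[_ _ h _] _ _ _]; apply: h. Qed.
Lemma starM x y : star (x * y) = star y * star x.
Proof. by case: HA => [[_ _ _ h] _ _ _]; apply: h. Qed.
Lemma nrm_ge0 x : 0 <= nrm x.
Proof. by case: HA => _ [h _ _ _ _] _ _; apply: h. Qed.
Lemma nrm_eq0 x : nrm x = 0 -> x = 0.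
Proof. by case: HA => _ [_ h _ _ _] _ _; apply: h. Qed.
Lemma nrmD x y : nrm (x + y) <= nrm x + nrm y.
Proof. by case: HA => _ [_ _ h _ _] _ _; apply: h. Qed.
Lemma nrmZ c x : nrm (c *: x) = complex.Re `|c| * nrm x.
Proof. by case: HA => _ [_ _ _ h _] _ _; apply: h. Qed.
Lemma nrmM x y : nrm (x * y) <= nrm x * nrm y.
Proof. by case: HA => _ [_ _ _ _ h] _ _; apply: h. Qed.
Lemma nrm_cstar x : nrm (star x * x) = nrm x ^+ 2.
Proof. by case: HA => _ _ h _; apply: h. Qed.

Lemma star0 : star 0 = 0.
Proof. by apply: (addrI (star 0)); rewrite -starD !addr0. Qed.

Lemma starN x : star (- x) = - star x.
Proof. by apply/eqP; rewrite -subr_eq0 opprK -starD addNr star0. Qed.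

Lemma starB x y : star (x - y) = star x - star y.
Proof. by rewrite starD starN. Qed.

Lemma star1 : star 1 = 1.
Proof. by rewrite -[LHS]mulr1 -[X in _ * X]starK -starM mulr1 starK. Qed.

Lemma star_sum (I : Type) (s : seq I) (F : I -> A) :
  star (\sum_(i <- s) F i) = \sum_(i <- s) star (F i).
Proof.
elim: s => [|a s IH]; first by rewrite !big_nil star0.
by rewrite !big_cons starD IH.
Qed.

Lemma starZr (t : R) x : star (t%:C *: x) = t%:C *: star x.
Proof. by rewrite starZ conj_Creal //; apply/complex_realP; exists t. Qed.

Lemma nrmZr (t : R) x : nrm (t%:C *: x) = `|t| * nrm x.
Proof. by rewrite nrmZ normc_def /= expr0n /= addr0 sqrtr_sqr. Qed.

Lemma nrm_chalf x : nrm (chalf R *: x) = nrm x / 2.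
Proof. by rewrite nrmZr ger0_norm ?invr_ge0 ?ler0n // mulrC. Qed.

Lemma nrm0 : nrm 0 = 0.
Proof. by rewrite -(scale0r (0 : A)) -[0 : R[i]]/((0 : R)%:C) nrmZr normr0 mul0r. Qed.

Lemma nrmN x : nrm (- x) = nrm x.
Proof.
have -> : - x = (-1 : R)%:C *: x by rewrite -scaleN1r; congr (_ *: _); apply/eqP; simpc.
by rewrite nrmZr normrN normr1 mul1r.
Qed.

Lemma nrm_distC x y : nrm (x - y) = nrm (y - x).
Proof. by rewrite -nrmN opprB. Qed.

Lemma nrm_dist_triangle x y z : nrm (x - z) <= nrm (x - y) + nrm (y - z).
Proof.
have -> : x - z = (x - y) + (y - z) by rewrite addrA subrK.
exact: nrmD.
Qed.

Lemma nrm_star x : nrm (star x) = nrm x.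
Proof.
have le_star y : nrm y <= nrm (star y).
  have [->|y_neq0] := eqVneq (nrm y) 0; first exact: nrm_ge0.
  have y_gt0 : 0 < nrm y by rewrite lt_def y_neq0 nrm_ge0.
  by rewrite -(ler_pM2r y_gt0) -expr2 -nrm_cstar nrmM.
by apply/eqP; rewrite eq_le le_star andbT -{2}[x]starK le_star.
Qed.

Lemma nrm_le_eq0 x : (forall e : R, 0 < e -> nrm x <= e) -> x = 0.
Proof.
move=> small; apply: nrm_eq0; apply/eqP; rewrite eq_le nrm_ge0 andbT.
by apply/ler_addgt0Pr => e e0; rewrite add0r small.
Qed.

Lemma nrm_sqrB a b : nrm (a * a - b * b) <= (nrm a + nrm b) * nrm (a - b).
Proof.
have -> : a * a - b * b = a * (a - b) + (a - b) * b.
  by rewrite mulrBr mulrBl addrA subrK.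
rewrite [_ * nrm _]mulrDl (mulrC (nrm b)); apply: le_trans (nrmD _ _) _.
by apply: lerD; apply: nrmM.
Qed.

Definition nrm_cvg (u : nat -> A) (l : A) : Prop :=
  forall e : R, 0 < e -> exists N, forall n, (N <= n)%N -> nrm (u n - l) < e.

Definition nrm_cauchy (u : nat -> A) : Prop :=
  forall e : R, 0 < e -> exists N, forall m n, (N <= m)%N -> (N <= n)%N ->
    nrm (u m - u n) < e.

Lemma nrm_cauchy_cvg u : nrm_cauchy u -> exists l, nrm_cvg u l.
Proof. by case: HA => _ _ _; apply. Qed.

Lemma nrm_cvg_le u l (M : R) : nrm_cvg u l -> (forall n, nrm (u n) <= M) -> nrm l <= M.
Proof.
move=> ul le_uM; apply/ler_addgt0Pr => e /ul[N /(_ N (leqnn N)) near_l].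
have -> : l = u N + (l - u N) by rewrite addrC subrK.
apply: le_trans (nrmD _ _) _.
by rewrite lerD // nrm_distC ltW.
Qed.

Lemma nrm_cvg_uniq u l l' : nrm_cvg u l -> nrm_cvg u l' -> l = l'.
Proof.
move=> ul ul'; apply/eqP; rewrite -subr_eq0; apply/eqP; apply: nrm_le_eq0 => e e0.
have e20 : 0 < e / 2 by rewrite divr_gt0.
have [[N hN] [N' hN']] := (ul _ e20, ul' _ e20).
pose n := maxn N N'.
have [lt_l lt_l'] := (hN n (leq_maxl _ _), hN' n (leq_maxr _ _)).
apply: le_trans (nrm_dist_triangle _ (u n) _) _.
by rewrite nrm_distC; move: lt_l lt_l'; lra.
Qed.

Lemma nrm_cauchy_geometric u :
  (forall n, nrm (u n.+1 - u n) <= (2^-1) ^+ n) -> nrm_cauchy u.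
Proof.
move=> step; set q : R := 2^-1.
have tail n k : nrm (u (n + k)%N - u n) <= 2 * q ^+ n - 2 * q ^+ (n + k).
  elim: k => [|k IH]; first by rewrite addn0 subrr nrm0 subrr.
  apply: le_trans (nrm_dist_triangle _ (u (n + k)%N) _) _.
  rewrite addnS exprS; have := step (n + k)%N; rewrite /q; move: IH.
  set a := (2^-1 : R) ^+ (n + k); lra.
have le_tail m n : (n <= m)%N -> nrm (u m - u n) <= 2 * q ^+ n.
  move=> /subnKC <-; apply: le_trans (tail _ _) _.
  by rewrite gerBl mulr_ge0 ?exprn_ge0 // invr_ge0.
move=> e e0; have [N hN] := expr_half_small (divr_gt0 e0 (ltr0Sn R 1)).
exists N => m n le_Nm le_Nn.
wlog le_nm : m n le_Nm le_Nn / (n <= m)%N.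
  move=> wlog_le; have [|/ltnW] := leqP n m; first exact: wlog_le.
  by rewrite nrm_distC; apply: wlog_le.
apply: le_lt_trans (le_tail _ _ le_nm) _.
by rewrite mulrC -ltr_pdivlMr // hN.
Qed.

End CStarAlgebra.

Section SquareRoot.
Variables (R : realType) (A : algType R[i]) (star : A -> A) (nrm : A -> R).
Hypothesis HA : is_unital_Cstar star nrm.
Variable h : A.
Hypotheses (h_sa : star h = h) (h_small : nrm h <= 2^-1).

Definition sqrt_step x := chalf R *: (h + x * x).

Fixpoint sqrt_iter n : A := if n is n'.+1 then sqrt_step (sqrt_iter n') else 0.
Local Notation w := sqrt_iter.

Lemma sqrt_step_le x : nrm x <= 2^-1 -> nrm (sqrt_step x) <= 2^-1.
Proof.
move=> x_small; rewrite (nrm_chalf HA).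
apply: le_trans (_ : (2^-1 + 2^-1 * 2^-1) / 2 <= _); last lra.
rewrite ler_pM2r ?invr_gt0 //; apply: le_trans (nrmD HA _ _) _.
apply: lerD => //; apply: le_trans (nrmM HA _ _) _.
by apply: ler_pM => //; apply: nrm_ge0 HA _.
Qed.

Lemma sqrt_step_contract x y : nrm x <= 2^-1 -> nrm y <= 2^-1 ->
  nrm (sqrt_step x - sqrt_step y) <= 2^-1 * nrm (x - y).
Proof.
move=> x_small y_small; rewrite -scalerBr opprD addrACA subrr add0r (nrm_chalf HA).
rewrite mulrC ler_pM2l ?invr_gt0 //; apply: le_trans (nrm_sqrB HA _ _) _.
by rewrite -[X in _ <= X]mul1r ler_wpM2r ?(nrm_ge0 HA) //; lra.
Qed.

Lemma sqrt_iter_le n : nrm (w n) <= 2^-1.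
Proof. by elim: n => [|n IH]; [rewrite (nrm0 HA) invr_ge0 | apply: sqrt_step_le]. Qed.

Lemma sqrt_iter_sa n : star (w n) = w n.
Proof.
elim: n => [|n IH] /=; first exact: (star0 HA).
by rewrite (starZr HA) (starD HA) (starM HA) IH h_sa.
Qed.

Lemma sqrt_iter_step n : nrm (w n.+1 - w n) <= (2^-1) ^+ n.
Proof.
elim: n => [|n IH].
  by rewrite /= subr0 /sqrt_step mulr0 addr0 (nrm_chalf HA) expr0; move: h_small; lra.
rewrite exprS; apply: le_trans (sqrt_step_contract (sqrt_iter_le n.+1) (sqrt_iter_le n)) _.
by rewrite ler_pM2l ?invr_gt0.
Qed.

(* [l = (h + l^2) / 2] is [(1 - l)^2 = 1 - h]. *)
Lemma sqrt_one_sub : exists y, star y * y = 1 - h.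
Proof.
have [l wl] := nrm_cauchy_cvg HA (nrm_cauchy_geometric HA sqrt_iter_step).
have l_small : nrm l <= 2^-1 := nrm_cvg_le HA wl sqrt_iter_le.
have l_sa : star l = l.
  apply: (nrm_cvg_uniq HA _ wl) => e /wl[N hN]; exists N => n /hN.
  by move=> lt_e; rewrite -(sqrt_iter_sa n) -(starB HA) (nrm_star HA).
have l_fix : l = sqrt_step l.
  apply: (nrm_cvg_uniq HA (u := fun n => w n.+1)).
    by move=> e /wl[N hN]; exists N => n /leqW /hN.
  move=> e /wl[N hN]; exists N => n /hN lt_e /=.
  apply: le_lt_trans (sqrt_step_contract (sqrt_iter_le n) l_small) _.
  by have := nrm_ge0 HA (w n - l); lra.
have ll : l + l = h + l * l.
  by rewrite {1 2}l_fix -scalerDl chalf_double scale1r.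
exists (1 - l); rewrite (starB HA) (star1 HA) l_sa mulrBl mul1r !mulrBr mulr1.
have -> : l * l = l + l - h by rewrite ll addrAC subrr add0r.
by rewrite opprB (addrAC (l + l)) addrK addrA subrK.
Qed.

End SquareRoot.

(** * Tracial states *)

Section ComplexParts.
Variable R : rcfType.
Implicit Types z w : R[i].
Local Open Scope complex_scope.

Lemma ReD z w : complex.Re (z + w) = complex.Re z + complex.Re w.
Proof. by case: z; case: w. Qed.

Lemma ImD z w : complex.Im (z + w) = complex.Im z + complex.Im w.
Proof. by case: z; case: w. Qed.

Lemma ReN z : complex.Re (- z) = - complex.Re z.
Proof. by case: z. Qed.

Lemma Re_sum (I : Type) (s : seq I) (F : I -> R[i]) :
  complex.Re (\sum_(i <- s) F i) = \sum_(i <- s) complex.Re (F i).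
Proof.
elim: s => [|a s IH]; first by rewrite !big_nil.
by rewrite !big_cons ReD IH.
Qed.

Lemma ReMr (t : R) z : complex.Re (t%:C * z) = t * complex.Re z.
Proof. by case: z => a b /=; ring. Qed.

Lemma ImMr (t : R) z : complex.Im (t%:C * z) = t * complex.Im z.
Proof. by case: z => a b /=; ring. Qed.

Lemma Re_mulNi z : complex.Re (- 'i * z) = complex.Im z.
Proof. by case: z => a b /=; ring. Qed.

Lemma eq_complex_ReIm z w :
  complex.Re z = complex.Re w -> complex.Im z = complex.Im w -> z = w.
Proof. by case: z w => [a b] [c d] /= -> ->. Qed.

End ComplexParts.

Section TracialState.
Variables (R : realType) (A : algType R[i]) (star : A -> A) (nrm : A -> R).
Hypothesis HA : is_unital_Cstar star nrm.
Variable tau : A -> R[i].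
Hypothesis Ht : tracial_state star tau.
Local Open Scope complex_scope.

Lemma tauD x y : tau (x + y) = tau x + tau y.
Proof. by case: Ht => h _ _ _ _; apply: h. Qed.
Lemma tauZ c x : tau (c *: x) = c * tau x.
Proof. by case: Ht => _ h _ _ _; apply: h. Qed.
Lemma tau_ge0 x : 0 <= tau (star x * x).
Proof. by case: Ht => _ _ h _ _; apply: h. Qed.
Lemma tau1 : tau 1 = 1.
Proof. by case: Ht. Qed.
Lemma tauC x y : tau (x * y) = tau (y * x).
Proof. by case: Ht => _ _ _ _ h; apply: h. Qed.

Lemma tau0 : tau 0 = 0.
Proof. by rewrite -(scale0r (0 : A)) tauZ mul0r. Qed.

Lemma tauN x : tau (- x) = - tau x.
Proof. by rewrite -scaleN1r tauZ mulN1r. Qed.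

Lemma tauB x y : tau (x - y) = tau x - tau y.
Proof. by rewrite tauD tauN. Qed.

Lemma tau_sum (I : Type) (s : seq I) (F : I -> A) :
  tau (\sum_(i <- s) F i) = \sum_(i <- s) tau (F i).
Proof.
elim: s => [|a s IH]; first by rewrite !big_nil tau0.
by rewrite !big_cons tauD IH.
Qed.

(* [1 - x] has a square root, so [tau (1 - x) >= 0]. *)
Lemma tau_sa_le1 x : star x = x -> nrm x <= 2^-1 ->
  complex.Im (tau x) = 0 /\ complex.Re (tau x) <= 1.
Proof.
move=> x_sa x_small; have [y y2] := sqrt_one_sub HA x_sa x_small.
have := tau_ge0 y; rewrite y2 tauB tau1 lecE.
by case: (tau x) => a b /= /andP[/eqP b0 a1]; split; lra.
Qed.

Lemma tau_sa_bound x : star x = x ->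
  complex.Im (tau x) = 0 /\ `|complex.Re (tau x)| <= 2 * nrm x + 1.
Proof.
move=> x_sa; set M := 2 * nrm x + 1.
have M_gt0 : 0 < M by rewrite /M; have := nrm_ge0 HA x; lra.
have t_gt0 : 0 < M^-1 by rewrite invr_gt0.
have scaled (s : R) : `|s| = M^-1 ->
    complex.Im (tau x) * s = 0 /\ complex.Re (tau x) * s <= 1.
  move=> sM; have s_sa : star (s%:C *: x) = s%:C *: x by rewrite (starZr HA) x_sa.
  have s_small : nrm (s%:C *: x) <= 2^-1.
    rewrite (nrmZr HA) sM mulrC ler_pdivrMr // /M; have := nrm_ge0 HA x; lra.
  by have := tau_sa_le1 s_sa s_small; rewrite tauZ ImMr ReMr !(mulrC s).
have [Im0 Re_le] := scaled _ (gtr0_norm t_gt0).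
have [_ Re_ge] := scaled _ (etrans (normrN _) (gtr0_norm t_gt0)).
have tM : M^-1 * M = 1 by rewrite mulVf // gt_eqF.
split; first by move/eqP: Im0; rewrite mulf_eq0 (gt_eqF t_gt0) orbF => /eqP.
by rewrite ler_norml; apply/andP; split; nra.
Qed.

Lemma Re_tau_skew x : star x = - x -> complex.Re (tau x) = 0.
Proof.
move=> x_asa; have y_sa : star ((- 'i) *: x) = (- 'i) *: x.
  by rewrite (starZ HA) x_asa scalerN -scaleNr; congr (_ *: _); apply/eqP; simpc.
have [Im0 _] := tau_sa_bound y_sa; move: Im0; rewrite tauZ.
by case: (tau x) => a b /=; lra.
Qed.

Lemma Re_tau_bound x : `|complex.Re (tau x)| <= 2 * nrm x + 1.
Proof.
set a := chalf R *: (x + star x).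
have a_sa : star a = a by rewrite (starZr HA) (starD HA) (starK HA) addrC.
have xa_asa : star (x - a) = - (x - a).
  have aa : a + a = x + star x by rewrite -scalerDl chalf_double scale1r.
  rewrite (starB HA) a_sa opprB; apply/eqP; rewrite subr_eq.
  by rewrite addrAC aa addrAC subrr add0r.
have Re_xa : complex.Re (tau x) = complex.Re (tau a).
  by apply/eqP; rewrite -subr_eq0 -ReN -ReD -tauB Re_tau_skew.
rewrite Re_xa; apply: le_trans (proj2 (tau_sa_bound a_sa)) _.
rewrite lerD2r ler_pM2l // (nrm_chalf HA) ler_pdivrMr // mulr_natr mulr2n.
by apply: le_trans (nrmD HA _ _) _; rewrite (nrm_star HA).
Qed.

Definition nrm2sq x := complex.Re (tau (star x * x)).
Definition dot2 x y := complex.Re (tau (star x * y + star y * x)).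

Lemma nrm2sq_ge0 x : 0 <= nrm2sq x.
Proof. by have := tau_ge0 x; rewrite lecE => /andP[]. Qed.

Lemma nrm2sq0 : nrm2sq 0 = 0.
Proof. by rewrite /nrm2sq (star0 HA) mul0r tau0. Qed.

Lemma nrm2sq1 : nrm2sq 1 = 1.
Proof. by rewrite /nrm2sq (star1 HA) mulr1 tau1. Qed.

Lemma nrm2sqZD (t : R) x y :
  nrm2sq (t%:C *: x + y) = t ^+ 2 * nrm2sq x + t * dot2 x y + nrm2sq y.
Proof.
rewrite /nrm2sq /dot2.
have -> : star (t%:C *: x + y) * (t%:C *: x + y) = t%:C *: (t%:C *: (star x * x)) +
    t%:C *: (star x * y + star y * x) + star y * y.
  rewrite (starD HA) (starZr HA) mulrDl !mulrDr -!scalerAl -!scalerAr.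
  by rewrite scalerDr !addrA.
by rewrite !tauD !tauZ !tauD !ReD !ReMr; ring.
Qed.

Lemma nrm2sqD_le x y : nrm2sq (x + y) <= 2 * nrm2sq x + 2 * nrm2sq y.
Proof.
have := nrm2sqZD 1 x y; have := nrm2sqZD (-1) x y.
have -> : (-1 : R)%:C = -1 by apply/eqP; simpc.
rewrite -[(1 : R)%:C]/(1 : R[i]) scale1r scaleN1r sqrrN expr1n !mul1r mulN1r.
by have := nrm2sq_ge0 (- x + y); lra.
Qed.

Lemma dot2_le (s : R) x y : 0 < s -> s * `|dot2 x y| <= s ^+ 2 * nrm2sq x + nrm2sq y.
Proof.
move=> s_gt0; have := nrm2sq_ge0 (s%:C *: x + y).
have := nrm2sq_ge0 ((- s)%:C *: x + y).
rewrite !nrm2sqZD sqrrN => ? ?.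
rewrite -[s in s * _](gtr0_norm s_gt0) -normrM ler_norml.
by apply/andP; split; lra.
Qed.

Lemma dot2_subadd x y : dot2 (x - y) (x + y) = 2 * (nrm2sq x - nrm2sq y).
Proof.
rewrite /dot2 /nrm2sq.
have -> : star (x - y) * (x + y) + star (x + y) * (x - y) =
    (star x * x - star y * y) + (star x * x - star y * y).
  rewrite (starB HA) (starD HA) mulrBl mulrDl !mulrDr !mulrN.
  move: (star x * x) (star x * y) (star y * x) (star y * y) => a b c d.
  rewrite opprD addrACA (addrACA a b) subrr addr0.
  by rewrite (addrACA (- c)) addNr add0r addrACA.
by rewrite tauD !tauB !ReD !ReN; ring.
Qed.

Lemma nrm2sqB_le (s : R) x y : 0 < s ->
  2 * s * `|nrm2sq x - nrm2sq y| <=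
  s ^+ 2 * nrm2sq (x - y) + 2 * (nrm2sq x + nrm2sq y).
Proof.
move=> s_gt0; have := dot2_le (x - y) (x + y) s_gt0.
rewrite dot2_subadd normrM (ger0_norm (ler0n _ 2)) mulrA (mulrC s).
by have := nrm2sqD_le x y; lra.
Qed.

Lemma Re_tau_sa_lt x (e : R) : star x = x -> 0 < e -> nrm2sq x < e ^+ 2 ->
  `|complex.Re (tau x)| < e.
Proof.
move=> x_sa e_gt0 x_lt; have s_gt0 : 0 < e^-1 by rewrite invr_gt0.
have := dot2_le x 1 s_gt0.
rewrite nrm2sq1 /dot2 x_sa (star1 HA) mulr1 mul1r tauD ReD -mulr2n normrMn mulr2n.
have small : e^-1 ^+ 2 * nrm2sq x < 1.
  by rewrite exprVn mulrC ltr_pdivrMr ?exprn_gt0 // mul1r.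
rewrite -(ltr_pM2l s_gt0) mulVf ?gt_eqF //.
by move: small; lra.
Qed.

End TracialState.

Section UniformTwoNorm.
Variables (R : realType) (A : algType R[i]) (star : A -> A) (nrm : A -> R).
Hypothesis HA : is_unital_Cstar star nrm.
Variable tau : A -> R[i].
Hypothesis Ht : tracial_state star tau.
Local Open Scope classical_set_scope.

Lemma sqrt_Re_le_sup2u y : Num.sqrt (complex.Re (tau y)) <= sup2u star y.
Proof.
apply: ub_le_sup; last by exists tau.
exists (Num.sqrt (2 * nrm y + 1)) => _ [sigma Hs <-].
by apply: ler_wsqrtr; apply: le_trans (Re_tau_bound HA Hs y); apply: ler_norm.
Qed.

Lemma Re_lt_of_sup2u_lt y (e : R) :
  sup2u star y < e -> 0 <= complex.Re (tau y) -> complex.Re (tau y) < e ^+ 2.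
Proof.
move=> y_lt Re_ge0; have sqrt_lt := le_lt_trans (sqrt_Re_le_sup2u y) y_lt.
have e_ge0 : 0 <= e by apply: ltW (le_lt_trans (sqrtr_ge0 _) sqrt_lt).
by rewrite -(sqr_sqrtr Re_ge0) ltr_pXn2r ?nnegrE ?sqrtr_ge0.
Qed.

Lemma nrm2sq_lt_of_norm2u_lt x (e : R) :
  norm2u star x < e -> nrm2sq star tau x < e ^+ 2.
Proof. by move=> x_lt; exact: (Re_lt_of_sup2u_lt x_lt (nrm2sq_ge0 Ht x)). Qed.

End UniformTwoNorm.

(** * From an invariant mean to an invariant tracial state *)

Section GroupLaws.
Variables (G : Type) (mul : G -> G -> G) (one : G) (inv : G -> G).
Hypothesis HG : group_axioms mul one inv.

Lemma gmulKg g h : mul (inv g) (mul g h) = h.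
Proof. by case: HG => mulA mul1g _ mulVg _; rewrite mulA mulVg mul1g. Qed.

Lemma gmulKVg g h : mul g (mul (inv g) h) = h.
Proof. by case: HG => mulA mul1g _ _ mulgV; rewrite mulA mulgV mul1g. Qed.

Lemma ginvMV g h : inv (mul (inv g) h) = mul (inv h) g.
Proof.
case: HG => mulA mul1g mulg1 mulVg mulgV.
have inv_unique a b : mul a b = one -> inv b = a.
  by move=> ab1; rewrite -[inv b]mul1g -ab1 -mulA mulgV mulg1.
by apply: inv_unique; rewrite -mulA gmulKVg mulVg.
Qed.

End GroupLaws.

Section Means.
Variables (R : realType) (G : Type).
Implicit Types f g : G -> R.

Lemma bounded_fun_add f g :
  Defs.bounded_fun f -> Defs.bounded_fun g -> Defs.bounded_fun (f \+ g).
Proof.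
move=> [M le_fM] [N le_gN]; exists (M + N) => x.
by apply: le_trans (ler_normD _ _) _; apply: lerD.
Qed.

Lemma bounded_fun_scale (c : R) f :
  Defs.bounded_fun f -> Defs.bounded_fun (fun x => c * f x).
Proof. by move=> [M le_fM]; exists (`|c| * M) => x; rewrite normrM ler_wpM2l. Qed.

Lemma bounded_fun_cst (c : R) : Defs.bounded_fun (fun _ : G => c).
Proof. by exists `|c|. Qed.

Variable m : (G -> R) -> R.
Hypothesis mD : forall f g, Defs.bounded_fun f -> Defs.bounded_fun g ->
  m (f \+ g) = m f + m g.
Hypothesis mZ : forall (c : R) f, Defs.bounded_fun f -> m (fun x => c * f x) = c * m f.

Lemma mean0 : m (fun _ => 0) = 0.
Proof.
have -> : (fun _ : G => 0 : R) = (fun x => 0 * (fun _ : G => 1) x).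
  by apply: funext => x; rewrite mul0r.
by rewrite mZ ?mul0r //; apply: bounded_fun_cst.
Qed.

Lemma mean_lin2 (a b : R) f g : Defs.bounded_fun f -> Defs.bounded_fun g ->
  m (fun x => a * f x + b * g x) = a * m f + b * m g.
Proof.
move=> bf bg; rewrite -(mZ a bf) -(mZ b bg).
exact: (mD (bounded_fun_scale a bf) (bounded_fun_scale b bg)).
Qed.

Local Open Scope complex_scope.

Definition cbounded (f : G -> R[i]) : Prop :=
  Defs.bounded_fun (fun x => complex.Re (f x)) /\
  Defs.bounded_fun (fun x => complex.Im (f x)).

Definition cmean (f : G -> R[i]) : R[i] :=
  (m (fun x => complex.Re (f x)))%:C + 'i * (m (fun x => complex.Im (f x)))%:C.

Lemma cmeanD (f g : G -> R[i]) :
  cbounded f -> cbounded g -> cmean (f \+ g) = cmean f + cmean g.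
Proof.
move=> [bRf bIf] [bRg bIg]; rewrite /cmean.
have -> : (fun x => complex.Re ((f \+ g) x)) =
    (fun x => complex.Re (f x)) \+ (fun x => complex.Re (g x)).
  by apply: funext => x; rewrite /= ReD.
have -> : (fun x => complex.Im ((f \+ g) x)) =
    (fun x => complex.Im (f x)) \+ (fun x => complex.Im (g x)).
  by apply: funext => x; rewrite /= ImD.
by rewrite !mD //; apply: eq_complex_ReIm => /=; ring.
Qed.

Lemma cmeanZ (c : R[i]) (f : G -> R[i]) :
  cbounded f -> cmean (fun x => c * f x) = c * cmean f.
Proof.
move=> [bR bI]; rewrite /cmean.
have -> : (fun x => complex.Re (c * f x)) =
    (fun x => complex.Re c * complex.Re (f x) + (- complex.Im c) * complex.Im (f x)).
  by apply: funext => x; case: c (f x) => [a b] [p q] /=; ring.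
have -> : (fun x => complex.Im (c * f x)) =
    (fun x => complex.Im c * complex.Re (f x) + complex.Re c * complex.Im (f x)).
  by apply: funext => x; case: c (f x) => [a b] [p q] /=; ring.
by rewrite !mean_lin2 //; case: c => a b; apply: eq_complex_ReIm => /=; ring.
Qed.

Lemma cmean_comp (t : G -> G) (f : G -> R[i]) :
  (forall g, Defs.bounded_fun g -> m (g \o t) = m g) ->
  cbounded f -> cmean (f \o t) = cmean f.
Proof. by move=> mt [bR bI]; rewrite /cmean -(mt _ bR) -(mt _ bI). Qed.

Hypothesis mP : forall f, Defs.bounded_fun f -> (forall x, 0 <= f x) -> 0 <= m f.

Lemma cmean_ge0 (f : G -> R[i]) : cbounded f -> (forall x, 0 <= f x) -> 0 <= cmean f.
Proof.
move=> [bR _] f_ge0; have Im0 x : complex.Im (f x) = 0 by apply: ger0_Im.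
rewrite /cmean (_ : (fun x => complex.Im (f x)) = fun _ => 0); last exact: funext.
rewrite mean0 mulr0 addr0 ler0c; apply: mP bR _ => x.
by have := f_ge0 x; rewrite lecE => /andP[].
Qed.

Hypothesis m1 : m (fun _ => 1) = 1.

Lemma cmean1 : cmean (fun _ => 1) = 1.
Proof. by rewrite /cmean m1 mean0 mulr0 addr0. Qed.

End Means.

Section AveragedTrace.
Variables (R : realType) (G : choiceType) (mul : G -> G -> G) (one : G) (inv : G -> G).
Hypothesis HG : group_axioms mul one inv.
Variables (A : algType R[i]) (star : A -> A) (nrm : A -> R).
Hypothesis HA : is_unital_Cstar star nrm.
Variable alpha : G -> A -> A.
Hypothesis Hal : is_action mul one star alpha.
Local Open Scope complex_scope.

Lemma alphaD g x y : alpha g (x + y) = alpha g x + alpha g y.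
Proof. by case: Hal => [[h _] _ _ _ _]; apply: h. Qed.
Lemma alphaZ g c x : alpha g (c *: x) = c *: alpha g x.
Proof. by case: Hal => [[_ h] _ _ _ _]; apply: h. Qed.
Lemma alphaM g x y : alpha g (x * y) = alpha g x * alpha g y.
Proof. by case: Hal => [_ h _ _ _]; apply: h. Qed.
Lemma alpha1 g : alpha g 1 = 1.
Proof. by case: Hal => [_ _ h _ _]; apply: h. Qed.
Lemma alpha_star g x : alpha g (star x) = star (alpha g x).
Proof. by case: Hal => [_ _ _ h _]; apply: h. Qed.
Lemma alpha_mul g h x : alpha (mul g h) x = alpha g (alpha h x).
Proof. by case: Hal => [_ _ _ _ [_ e]]; apply: e. Qed.
Lemma alpha0 g : alpha g 0 = 0.
Proof. by rewrite -(scale0r (0 : A)) alphaZ !scale0r. Qed.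

Lemma tracial_state_comp tau g : tracial_state star tau ->
  tracial_state star (fun x => tau (alpha g x)).
Proof.
move=> Ht; split.
- by move=> x y; rewrite alphaD (tauD Ht).
- by move=> c x; rewrite alphaZ (tauZ Ht).
- by move=> x; rewrite alphaM alpha_star (tau_ge0 Ht).
- by rewrite alpha1 (tau1 Ht).
- by move=> x y; rewrite !alphaM (tauC Ht).
Qed.

Variable tau : A -> R[i].
Hypothesis Ht : tracial_state star tau.

Definition orbit_trace x g := tau (alpha (inv g) x).

Lemma orbit_trace_cbounded x : cbounded (orbit_trace x).
Proof.
have Re_bounded y : Defs.bounded_fun (fun g => complex.Re (orbit_trace y g)).
  by exists (2 * nrm y + 1) => g; apply: (Re_tau_bound HA (tracial_state_comp _ Ht)).
split=> //; have [M le_M] := Re_bounded ((- 'i) *: x); exists M => g.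
by move: (le_M g); rewrite /orbit_trace alphaZ (tauZ Ht) Re_mulNi.
Qed.

Lemma invariant_trace_of_amenable :
  amenable_group R mul inv -> invariant_tracial_state star alpha.
Proof.
case=> m [mD mZ mP m1 mI]; have ob := orbit_trace_cbounded.
exists (fun x => cmean m (orbit_trace x)); split; first split.
- move=> x y; rewrite -(cmeanD mD) //; congr cmean.
  by apply: funext => g; rewrite /orbit_trace /= alphaD (tauD Ht).
- move=> c x; rewrite -(cmeanZ mD mZ) //; congr cmean.
  by apply: funext => g; rewrite /orbit_trace alphaZ (tauZ Ht).
- move=> x; apply: (cmean_ge0 mZ mP) => // g.
  by rewrite /orbit_trace alphaM alpha_star (tau_ge0 Ht).
- rewrite -(cmean1 mZ m1); congr cmean.
  by apply: funext => g; rewrite /orbit_trace alpha1 (tau1 Ht).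
- by move=> x y; congr cmean; apply: funext => g; rewrite /orbit_trace !alphaM (tauC Ht).
- move=> k x; have -> : orbit_trace (alpha k x) = orbit_trace x \o mul (inv k).
    by apply: funext => g; rewrite /orbit_trace /= -alpha_mul (ginvMV HG).
  by apply: cmean_comp => // f bf; exact: (mI f k bf).
Qed.

End AveragedTrace.

(** * From an invariant tracial state to an invariant mean *)

Section ApproximateMeans.
Local Open Scope classical_set_scope.

Lemma ultra_bounded_cvg (R : realType) (I : Type) (U : set_system I) (v : I -> R)
  (b : R) :
  UltraFilter U -> (forall i, `|v i| <= b) -> exists p : R, v @ U --> p.
Proof.
move=> UU v_le; have UF : ProperFilter (v @ U) by apply: fmap_proper_filter.
have v_in : U (v @^-1` `[- b, b]).
  by apply: filterS (@filterT _ U _) => i _ /=; rewrite in_itv /= -ler_norml.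
have [p [_ p_clust]] := segment_compact UF v_in.
exists p => N Np; case: (in_ultra_setVsetC (v @^-1` N) UU) => // vNc.
have vNc' : (v @ U) (~` N) := vNc.
by have [x [nNx /nNx]] := p_clust _ _ vNc' Np.
Qed.

Variables (R : realType) (G : Type) (mul : G -> G -> G) (inv : G -> G).
Variables (I : Type) (F : set_system I).
Hypothesis FF : ProperFilter F.
Variable v : I -> (G -> R) -> R.
Hypothesis vD : forall i f g, Defs.bounded_fun f -> Defs.bounded_fun g ->
  v i (f \+ g) = v i f + v i g.
Hypothesis vZ : forall i (c : R) f, Defs.bounded_fun f ->
  v i (fun x => c * f x) = c * v i f.
Hypothesis vP : forall i f, Defs.bounded_fun f -> (forall x, 0 <= f x) -> 0 <= v i f.
Hypothesis vB : forall f, Defs.bounded_fun f -> exists M : R, forall i, `|v i f| <= M.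
Hypothesis v1 : (fun i => v i (fun _ => 1)) @ F --> (1 : R).
Hypothesis vI : forall f g, Defs.bounded_fun f ->
  (fun i => v i (fun h => f (mul (inv g) h)) - v i f) @ F --> (0 : R).

Lemma amenable_of_approx_means : amenable_group R mul inv.
Proof.
have [U [UU FU]] := ultraFilterLemma FF; have UF : ProperFilter U by case: UU.
have F_to_U (w : I -> R) (a : R) : w @ F --> a -> w @ U --> a by move=> wa P /wa /FU.
have lim_uniq (w : I -> R) (a b : R) : w @ U --> a -> w @ U --> b -> a = b.
  move=> wa wb.
  by rewrite -(cvg_lim (@Rhausdorff R) wa) -(cvg_lim (@Rhausdorff R) wb).
pose m f := lim ((fun i => v i f) @ U).
have m_cvg f : Defs.bounded_fun f -> (fun i => v i f) @ U --> m f.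
  move=> /vB[M v_le]; have [p vp] := ultra_bounded_cvg UU v_le.
  by rewrite /m (cvg_lim (@Rhausdorff R) vp).
exists m; split.
- move=> f g bf bg; apply: (lim_uniq _ _ _ (m_cvg _ (bounded_fun_add bf bg))).
  rewrite (_ : (fun i => _) = (fun i => v i f) \+ (fun i => v i g)).
    exact: cvgD (m_cvg f bf) (m_cvg g bg).
  by apply: funext => i; rewrite vD.
- move=> c f bf; apply: (lim_uniq _ _ _ (m_cvg _ (bounded_fun_scale c bf))).
  rewrite (_ : (fun i => _) = (fun _ => c) \* (fun i => v i f)).
    exact: cvgM (cvg_cst c) (m_cvg f bf).
  by apply: funext => i; rewrite vZ.
- move=> f bf f_ge0; apply: (closed_cvg (fun x : R => 0 <= x)) (m_cvg f bf).
    exact: closed_ge.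
  by apply: filterS (@filterT _ U _) => i _; apply: vP.
- exact: (lim_uniq _ _ _ (m_cvg _ (bounded_fun_cst _ 1)) (F_to_U _ _ v1)).
- move=> f g bf; apply/eqP; rewrite -subr_eq0; apply/eqP.
  have bfg : Defs.bounded_fun (fun h => f (mul (inv g) h)).
    by case: bf => M le_M; exists M.
  apply: (lim_uniq _ _ _ (cvgB (m_cvg _ bfg) (m_cvg _ bf))).
  exact: (F_to_U _ _ (vI g bf)).
Qed.

End ApproximateMeans.

Section FinitelySupportedMeans.
Variables (R : realType) (G : choiceType) (mul : G -> G -> G) (one : G) (inv : G -> G).
Hypothesis HG : group_axioms mul one inv.
Variables (A : algType R[i]) (star : A -> A) (nrm : A -> R).
Hypothesis HA : is_unital_Cstar star nrm.
Variable alpha : G -> A -> A.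
Hypothesis Hal : is_action mul one star alpha.
Variable tau : A -> R[i].
Hypothesis Ht : tracial_state star tau.
Hypothesis tau_inv : forall g x, tau (alpha g x) = tau x.
Local Open Scope classical_set_scope.
Local Notation nrm2sq := (nrm2sq star tau).
Local Notation talpha := (talpha mul inv alpha).
Implicit Types (xi eta : G -> A) (f : G -> R) (X Y : {fset G}).

Definition vanishes_off xi X := forall h, h \notin X -> xi h = 0.

Definition nrm2sq_ell2 xi := complex.Re (tau (ip star xi xi)).

Definition wmean xi f := \sum_(h \in [set: G]) f h * nrm2sq (xi h).

Lemma compact_supp_vanishes xi : compact_supp xi -> exists X, vanishes_off xi X.
Proof.
move=> fin; exists (fset_set [set g | xi g != 0]) => h.
by rewrite in_fset_set // mem_setE unfold_in negbK => /eqP.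
Qed.

Lemma vanishes_off_sub xi X Y : (X `<=` Y)%fset -> vanishes_off xi X -> vanishes_off xi Y.
Proof. by move=> /fsubsetP XY xiX h hY; apply: xiX; apply: contra hY; apply: XY. Qed.

Lemma vanishes_offB xi eta X : vanishes_off xi X -> vanishes_off eta X ->
  vanishes_off (fun h => xi h - eta h) X.
Proof. by move=> xiX etaX h hX; rewrite xiX ?etaX ?subr0. Qed.

Lemma vanishes_off_talpha xi X g :
  vanishes_off xi X -> vanishes_off (talpha g xi) [fset mul g x | x in X]%fset.
Proof.
move=> xiX h hX; rewrite /talpha xiX ?(alpha0 Hal) //; apply: contra hX => hgX.
by apply/imfsetP; exists (mul (inv g) h); rewrite ?(gmulKVg HG).
Qed.

Lemma vanishes_off_talphaB xi X g : vanishes_off xi X ->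
  vanishes_off (fun h => talpha g xi h - xi h) (X `|` [fset mul g x | x in X])%fset.
Proof.
move=> xiX; apply: vanishes_offB; last exact: vanishes_off_sub (fsubsetUl _ _) xiX.
exact: vanishes_off_sub (fsubsetUr _ _) (vanishes_off_talpha xiX).
Qed.

Lemma ip_seq xi X : vanishes_off xi X -> ip star xi xi = \sum_(h <- X) star (xi h) * xi h.
Proof. by move=> xiX; rewrite /ip (fsbigTE X) // => h /xiX ->; rewrite mulr0. Qed.

Lemma nrm2sq_ell2_seq xi X : vanishes_off xi X -> nrm2sq_ell2 xi = \sum_(h <- X) nrm2sq (xi h).
Proof. by move=> xiX; rewrite /nrm2sq_ell2 (ip_seq xiX) (tau_sum Ht) Re_sum. Qed.

Lemma nrm2sq_ell2_ge0 xi X : vanishes_off xi X -> 0 <= nrm2sq_ell2 xi.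
Proof. by move=> xiX; rewrite (nrm2sq_ell2_seq xiX) sumr_ge0 // => h _; apply: nrm2sq_ge0. Qed.

Lemma ip_sa xi X : vanishes_off xi X -> star (ip star xi xi) = ip star xi xi.
Proof.
move=> xiX; rewrite (ip_seq xiX) (star_sum HA); apply: eq_bigr => h _.
by rewrite (starM HA) (starK HA).
Qed.

Lemma nrm2sq_ell2_lt u X (e : R) : vanishes_off u X -> norm2u_ell2 star u < e ->
  nrm2sq_ell2 u < e ^+ 2.
Proof. by move=> uX u_lt; apply: (Re_lt_of_sup2u_lt HA Ht u_lt (nrm2sq_ell2_ge0 uX)). Qed.

Lemma nrm2sq_ell2_near1 xi X (e : R) : vanishes_off xi X -> 0 < e ->
  norm2u star (ip star xi xi - 1) < e -> `|nrm2sq_ell2 xi - 1| < e.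
Proof.
move=> xiX e_gt0 /(nrm2sq_lt_of_norm2u_lt HA Ht) lt_e.
have d_sa : star (ip star xi xi - 1) = ip star xi xi - 1.
  by rewrite (starB HA) (star1 HA) (ip_sa xiX).
by have := Re_tau_sa_lt HA Ht d_sa e_gt0 lt_e; rewrite (tauB Ht) (tau1 Ht) ReD.
Qed.

Lemma almost_invariant_vector (K : seq G) (e : R) :
  tracially_amenable mul inv star nrm alpha -> 0 < e ->
  exists xi X, [/\ vanishes_off xi X, `|nrm2sq_ell2 xi - 1| < e &
    forall g, g \in K -> nrm2sq_ell2 (fun h => talpha g xi h - xi h) < e ^+ 2].
Proof.
move=> Htam e_gt0; have [xi [xi_supp _ _ xi_mass xi_inv]] := Htam [::] K e e_gt0.
have [X xiX] := compact_supp_vanishes xi_supp; exists xi, X; split.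
- exact: xiX.
- exact: (nrm2sq_ell2_near1 xiX e_gt0 xi_mass).
- by move=> g /xi_inv; apply: (nrm2sq_ell2_lt (vanishes_off_talphaB xiX)).
Qed.

Lemma wmean_seq xi X f : vanishes_off xi X ->
  wmean xi f = \sum_(h <- X) f h * nrm2sq (xi h).
Proof.
move=> xiX; rewrite /wmean (fsbigTE X) // => h /xiX ->.
by rewrite (nrm2sq0 HA Ht) mulr0.
Qed.

Lemma wmeanD xi X f g : vanishes_off xi X ->
  wmean xi (f \+ g) = wmean xi f + wmean xi g.
Proof.
move=> xiX; rewrite !(wmean_seq _ xiX) -big_split.
by apply: eq_bigr => h _; rewrite mulrDl.
Qed.

Lemma wmeanZ xi X (c : R) f : vanishes_off xi X ->
  wmean xi (fun x => c * f x) = c * wmean xi f.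
Proof.
move=> xiX; rewrite !(wmean_seq _ xiX) mulr_sumr.
by apply: eq_bigr => h _; rewrite mulrA.
Qed.

Lemma wmean_ge0 xi f : (forall x, 0 <= f x) -> 0 <= wmean xi f.
Proof. by move=> f_ge0; apply: fsumr_ge0 => h _; rewrite mulr_ge0 ?nrm2sq_ge0. Qed.

Lemma wmean1 xi X : vanishes_off xi X -> wmean xi (fun _ => 1) = nrm2sq_ell2 xi.
Proof.
move=> xiX; rewrite (wmean_seq _ xiX) (nrm2sq_ell2_seq xiX).
by apply: eq_bigr => h _; rewrite mul1r.
Qed.

Lemma wmean_le xi X f (B : R) : vanishes_off xi X -> (forall x, `|f x| <= B) ->
  `|wmean xi f| <= B * nrm2sq_ell2 xi.
Proof.
move=> xiX f_le; rewrite (wmean_seq _ xiX) (nrm2sq_ell2_seq xiX) mulr_sumr.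
apply: le_trans (ler_norm_sum _ _ _) _; apply: ler_sum => h _.
by rewrite normrM (ger0_norm (nrm2sq_ge0 Ht _)) ler_wpM2r ?nrm2sq_ge0.
Qed.

Lemma nrm2sq_alpha g x : nrm2sq (alpha g x) = nrm2sq x.
Proof.
rewrite -[LHS]/(complex.Re (tau (star (alpha g x) * alpha g x))).
by rewrite -(alpha_star Hal) -(alphaM Hal) tau_inv.
Qed.

Lemma wmean_talpha xi g f : wmean (talpha g xi) (fun h => f (mul (inv g) h)) = wmean xi f.
Proof.
have mul_bij : bijective (mul g).
  by exists (mul (inv g)) => x; [apply: (gmulKg HG) | apply: (gmulKVg HG)].
rewrite /wmean (reindex_fsbigT (mul g) _ mul_bij); apply: eq_fsbigr => h _.
by rewrite /talpha !(gmulKg HG) nrm2sq_alpha.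
Qed.

Lemma wmeanB_le xi eta X f (B s : R) : vanishes_off xi X -> vanishes_off eta X ->
  (forall x, `|f x| <= B) -> 0 < s ->
  2 * s * `|wmean xi f - wmean eta f| <=
  B * (s ^+ 2 * nrm2sq_ell2 (fun h => xi h - eta h) + 2 * (nrm2sq_ell2 xi + nrm2sq_ell2 eta)).
Proof.
move=> xiX etaX f_le s_gt0; have dX := vanishes_offB xiX etaX.
rewrite (wmean_seq _ xiX) (wmean_seq _ etaX).
rewrite (nrm2sq_ell2_seq xiX) (nrm2sq_ell2_seq etaX) (nrm2sq_ell2_seq dX).
rewrite -sumrB -big_split !mulr_sumr -big_split mulr_sumr.
apply: le_trans (ler_wpM2l _ (ler_norm_sum _ _ _)) _; first by rewrite mulr_ge0 // ltW.
rewrite mulr_sumr; apply: ler_sum => h _; rewrite -mulrBr normrM mulrCA.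
apply: ler_pM => //; first by rewrite mulr_ge0 ?mulr_ge0 // ltW.
exact: (nrm2sqB_le HA Ht (xi h) (eta h) s_gt0).
Qed.

Lemma wmean_translate_le xi X g f (B s : R) : vanishes_off xi X ->
  (forall x, `|f x| <= B) -> 0 < s ->
  2 * s * `|wmean xi (fun h => f (mul (inv g) h)) - wmean xi f| <=
  B * (s ^+ 2 * nrm2sq_ell2 (fun h => talpha g xi h - xi h) + 4 * nrm2sq_ell2 xi).
Proof.
move=> xiX f_le s_gt0.
set X' := (X `|` [fset mul g x | x in X])%fset.
have xiX' : vanishes_off xi X' := vanishes_off_sub (fsubsetUl _ _) xiX.
have etaX' : vanishes_off (talpha g xi) X'.
  exact: vanishes_off_sub (fsubsetUr _ _) (vanishes_off_talpha (g := g) xiX).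
have eta_mass : nrm2sq_ell2 (talpha g xi) = nrm2sq_ell2 xi.
  by rewrite -(wmean1 etaX') -(wmean1 xiX') -(wmean_talpha xi g (fun _ => 1)).
rewrite -(wmean_talpha xi g f) distrC.
apply: le_trans (wmeanB_le etaX' xiX' _ s_gt0) _ => [x|]; first exact: f_le.
by rewrite eta_mass (_ : 2 * _ = 4 * nrm2sq_ell2 xi) //; ring.
Qed.

Lemma wmean_translate_small xi X g f (B e : R) : vanishes_off xi X ->
  (forall x, `|f x| <= B) -> 0 < e -> nrm2sq_ell2 xi <= 2 ->
  nrm2sq_ell2 (fun h => talpha g xi h - xi h) < e ^+ 2 ->
  `|wmean xi (fun h => f (mul (inv g) h)) - wmean xi f| <= 5 * B * e.
Proof.
move=> xiX f_le e_gt0 mass_le D_lt.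
have B_ge0 : 0 <= B := le_trans (normr_ge0 _) (f_le one).
have s_gt0 : 0 < e^-1 by rewrite invr_gt0.
have D_small : e^-1 ^+ 2 * nrm2sq_ell2 (fun h => talpha g xi h - xi h) <= 1.
  by rewrite exprVn mulrC ler_pdivrMr ?exprn_gt0 // mul1r ltW.
have := wmean_translate_le g xiX f_le s_gt0.
set w := `|_ - _| => w_le; have w_ge0 : 0 <= w by apply: normr_ge0.
have {w_le} w_le : 2 * e^-1 * w <= 9 * B.
  by apply: le_trans w_le _; rewrite mulrC ler_wpM2r //; move: D_small mass_le; lra.
have ee : e^-1 * e = 1 by rewrite mulVf ?gt_eqF.
by have := mulr_ge0 B_ge0 (ltW e_gt0); nra.
Qed.

End FinitelySupportedMeans.

Section Cofinal.
Variable T : eqType.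
Local Open Scope classical_set_scope.

Definition cofinal : set_system (seq T * nat) :=
  filter_from [set: seq T * nat]
    (fun j => [set i : seq T * nat | {subset j.1 <= i.1} /\ (j.2 <= i.2)%N]).

Lemma cofinal_proper : ProperFilter cofinal.
Proof.
have : Filter cofinal.
  apply: filter_from_filter; first by exists ([::], 0%N).
  move=> j1 j2 _ _; exists (j1.1 ++ j2.1, maxn j1.2 j2.2) => // i [sub le].
  split; split.
  - by move=> x x1; apply: sub; rewrite mem_cat x1.
  - by apply: leq_trans le; rewrite leq_maxl.
  - by move=> x x2; apply: sub; rewrite mem_cat x2 orbT.
  - by apply: leq_trans le; rewrite leq_maxr.
by move=> cofinal_filter; apply: filter_from_proper => j _; exists j; split.
Qed.

Lemma cofinal_eventually (K : seq T) (N : nat) :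
  cofinal [set i : seq T * nat | {subset K <= i.1} /\ (N <= i.2)%N].
Proof. by exists (K, N). Qed.

End Cofinal.

Section AmenableOfInvariantTrace.
Variables (R : realType) (G : choiceType) (mul : G -> G -> G) (one : G) (inv : G -> G).
Hypothesis HG : group_axioms mul one inv.
Variables (A : algType R[i]) (star : A -> A) (nrm : A -> R).
Hypothesis HA : is_unital_Cstar star nrm.
Variable alpha : G -> A -> A.
Hypothesis Hal : is_action mul one star alpha.
Variable tau : A -> R[i].
Hypothesis Ht : tracial_state star tau.
Hypothesis tau_inv : forall g x, tau (alpha g x) = tau x.
Hypothesis Htam : tracially_amenable mul inv star nrm alpha.
Local Open Scope classical_set_scope.
Local Notation talpha := (talpha mul inv alpha).
Local Notation nrm2sq_ell2 := (nrm2sq_ell2 star tau).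

Lemma amenable_of_invariant_trace : amenable_group R mul inv.
Proof.
pose eps (i : seq G * nat) : R := i.2.+1%:R^-1.
have eps_gt0 i : 0 < eps i by rewrite invr_gt0.
have approx i : exists p : (G -> A) * {fset G},
    [/\ vanishes_off p.1 p.2, `|nrm2sq_ell2 p.1 - 1| < eps i &
        forall g, g \in i.1 -> nrm2sq_ell2 (fun h => talpha g p.1 h - p.1 h) < eps i ^+ 2].
  have [xi [X ?]] := almost_invariant_vector HG HA Hal Ht i.1 Htam (eps_gt0 i).
  by exists (xi, X).
have [xs xs_spec] := choice approx.
have xsX i : vanishes_off (xs i).1 (xs i).2 by case: (xs_spec i).
have mass_near i : `|nrm2sq_ell2 (xs i).1 - 1| < eps i by case: (xs_spec i).
have mass_le2 i : nrm2sq_ell2 (xs i).1 <= 2.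
  have : eps i <= 1 by rewrite invf_le1 ?ler1n ?ltr0Sn.
  by move: (mass_near i); rewrite ltr_norml; lra.
have FF := cofinal_proper G.
apply: (amenable_of_approx_means FF (v := fun i => wmean star tau (xs i).1)).
- by move=> i f g _ _; exact: (wmeanD HA Ht _ _ (xsX i)).
- by move=> i c f _; exact: (wmeanZ HA Ht _ _ (xsX i)).
- by move=> i f _; exact: wmean_ge0.
- move=> f [B f_le]; exists (B * 2) => i.
  apply: le_trans (wmean_le HA Ht (xsX i) f_le) _.
  by rewrite ler_wpM2l ?mass_le2 // (le_trans (normr_ge0 _) (f_le one)).
- apply/cvgrPdist_lt => e e_gt0; have [N epsN] := inv_succ_small e_gt0.
  apply: filterS (cofinal_eventually [::] N) => i [_ Ni] /=.
  by rewrite (wmean1 HA Ht (xsX i)) distrC (lt_trans (mass_near i) (epsN _ Ni)).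
- move=> f g [B f_le]; apply/cvgrPdist_lt => e e_gt0.
  have B_ge0 : 0 <= B := le_trans (normr_ge0 _) (f_le one).
  have B1_gt0 : 0 < 5 * B + 1 by rewrite ltr_wpDl ?mulr_ge0.
  have [N epsN] := inv_succ_small (divr_gt0 e_gt0 B1_gt0).
  apply: filterS (cofinal_eventually [:: g] N) => i [gi Ni] /=; rewrite sub0r normrN.
  have g_in : g \in i.1 by apply: gi; rewrite mem_head.
  have [_ _ /(_ g g_in) D_lt] := xs_spec i.
  have := wmean_translate_small HG HA Hal Ht tau_inv (xsX i) f_le (eps_gt0 i) (mass_le2 i) D_lt.
  move/le_lt_trans; apply.
  have := epsN _ Ni; rewrite ltr_pdivlMr // => lt_e.
  by apply: le_lt_trans lt_e; rewrite mulrC ler_pM2l ?lerDl.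
Qed.

End AmenableOfInvariantTrace.

Unset Implicit Arguments.

Theorem lemma2p9 (R : realType) (G : choiceType) (mul : G -> G -> G) (one : G)
  (inv : G -> G) (HG : group_axioms mul one inv)
  (A : algType R[i]) (star : A -> A) (nrm : A -> R)
  (HA : is_unital_Cstar star nrm)
  (alpha : G -> A -> A) (Halpha : is_action mul one star alpha)
  (Htam : tracially_amenable mul inv star nrm alpha)
  (HT : exists tau : A -> R[i], tracial_state star tau) :
  amenable_group R mul inv <-> invariant_tracial_state star alpha.
Proof.
have [tau Ht] := HT; split; first exact: (invariant_trace_of_amenable HG HA Halpha Ht).
case=> tau' [Ht' tau'_inv].
exact: (amenable_of_invariant_trace HG HA Halpha Ht' tau'_inv Htam).
Qed.
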